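(* Let $C$ be a curve of genus $g$ over an algebraically closed field of characteristic $p>0$, with Hasse-Witt matrix $H=(h_{i,j})_{1\le i,j\le g}$. Assume that either $H$ is diagonal, or $H$ is anti-diagonal (i.e. $h_{i,j}=0$ unless $j=g-i+1$) and for each $1\le i\le g$ either $h_{i,g-i+1}=h_{g-i+1,i}=0$ or both $h_{i,g-i+1}\neq 0$ and $h_{g-i+1,i}\neq 0$. Then $\mathrm{rank}(H)$ equals the $p$-rank of $C$. Consequently, any supersingular curve of genus $g$ whose Hasse-Witt matrix satisfies this assumption is superspecial (i.e. has $a$-number $g$).
   Context: The Hasse-Witt matrix $H$ of $C$ with respect to a basis $v_1,\dots,v_g$ of $H^1(C,\mathcal O_C)$ is defined by $(\mathrm{Frob}_C^*(v_1),\dots,\mathrm{Frob}_C^*(v_g))=(v_1,\dots,v_g)H$, where $\mathrm{Frob}_C^*$ is the $p$-linear map induced by the absolute Frobenius. The $p$-rank $f_C$ is defined by $\#J(C)[p]=p^{f_C}$ and equals $\mathrm{rank}(H H^{(p)}\cdots H^{(p^{g-1})})$, where $H^{(p^i)}$ is $H$ with entries raised to the $p^i$-th power. The $a$-number is $g-\mathrm{rank}(H)$. $C$ is superspecial if $J(C)$ is isomorphic to a product of supersingular elliptic curves (equivalently $H=0$); $C$ is supersingular if $J(C)$ is isogenous to a product of supersingular elliptic curves. *)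

From HB Require Import structures.
From mathcomp Require Import all_boot all_order all_algebra.
Set Implicit Arguments. Unset Strict Implicit. Unset Printing Implicit Defensive.
Import GRing.Theory.
Local Open Scope ring_scope.

Definition frob_mx (F : fieldType) (p k : nat) (g : nat) (H : 'M[F]_g) : 'M[F]_g :=
  map_mx (fun x => x ^+ (p ^ k)) H.

Fixpoint hw_iter (F : fieldType) (p : nat) (g : nat) (H : 'M[F]_g) (n : nat) : 'M[F]_g :=
  match n with
  | 0 => 1%:M
  | n'.+1 => hw_iter p H n' *m frob_mx p n' H
  end.

Definition p_rank (F : fieldType) (p g : nat) (H : 'M[F]_g) : nat :=
  \rank (hw_iter p H g).

Definition a_number (F : fieldType) (g : nat) (H : 'M[F]_g) : nat :=
  (g - \rank H)%N.

(* anti-diagonal: h_{i,j} = 0 unless j = g - i + 1 (1-based), i.e. j = rev_ord i *)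
Definition is_antidiag_mx (F : fieldType) (g : nat) (H : 'M[F]_g) : Prop :=
  forall i j : 'I_g, j != rev_ord i -> H i j = 0.

Definition hw_hyp (F : fieldType) (g : nat) (H : 'M[F]_g) : Prop :=
  is_diag_mx H \/
  (is_antidiag_mx H /\
   forall i : 'I_g,
     (H i (rev_ord i) = 0 /\ H (rev_ord i) i = 0) \/
     (H i (rev_ord i) != 0 /\ H (rev_ord i) i != 0)).

From HB Require Import structures.
From mathcomp Require Import all_boot all_order all_algebra.
Local Open Scope ring_scope.
Import GRing.Theory.
Set Implicit Arguments. Unset Strict Implicit.

(* Both hypotheses say that H is supported on the graph of an involution s of
   the index set (the identity, or i |-> g + 1 - i) and that the set of rows i
   with h_{i, s i} = 0 is s-stable.  A product of matrices supported on graphs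
   is supported on the graph of the composite, so H H^(p) ... H^(p^(g-1)) is
   supported on the graph of s^g, with (i, s^g i) entry
   prod_k h_{s^k i, s^(k+1) i}^(p^k), which vanishes exactly when h_{i, s i}
   does.  Two matrices supported on graphs of injective maps, with the same
   vanishing rows, factor through each other and hence have the same rank. *)

Lemma iter_can (T : Type) (f f' : T -> T) n :
  cancel f f' -> cancel (iter n f) (iter n f').
Proof. by move=> fK; elim: n => // n IHn x; rewrite iterSr iterS fK IHn. Qed.

(* Unlike in the usual notion of monomial matrix, the entries [A i (s i)] may vanish. *)
Definition is_monomial_mx (R : pzSemiRingType) m n (s : 'I_m -> 'I_n)
    (A : 'M[R]_(m, n)) : Prop :=
  forall i j, j != s i -> A i j = 0.

Section MonomialMatrices.

Variable R : pzSemiRingType.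

Lemma map_monomial_mx (f : R -> R) m n (s : 'I_m -> 'I_n) (A : 'M_(m, n)) :
  f 0 = 0 -> is_monomial_mx s A -> is_monomial_mx s (map_mx f A).
Proof. by move=> f0 sA i j ne_j; rewrite mxE sA. Qed.

Variables (m n k : nat) (s : 'I_m -> 'I_n) (t : 'I_n -> 'I_k).
Variables (A : 'M[R]_(m, n)) (B : 'M[R]_(n, k)).
Hypotheses (sA : is_monomial_mx s A) (tB : is_monomial_mx t B).

Lemma mulmx_monomialE i j : (A *m B) i j = A i (s i) * B (s i) j.
Proof.
rewrite mxE (bigD1 (s i)) //= big1 ?addr0 // => l ne_l.
by rewrite sA ?mul0r.
Qed.

Lemma mulmx_monomial : is_monomial_mx (t \o s) (A *m B).
Proof. by move=> i j ne_j; rewrite mulmx_monomialE tB ?mulr0. Qed.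

End MonomialMatrices.

Section MonomialRank.

Variable F : fieldType.

Lemma mxrank_monomial_le m n k (A : 'M[F]_(m, n)) (B : 'M[F]_(m, k))
    (t : 'I_m -> 'I_k) (t' : 'I_k -> 'I_m) :
  cancel t t' -> is_monomial_mx t B ->
  (forall i, B i (t i) = 0 -> forall j, A i j = 0) -> (\rank A <= \rank B)%N.
Proof.
move=> tK tB A_zero.
pose U := \matrix_(l, j) (A (t' l) j / B (t' l) l).
suff -> : A = B *m U by apply: mxrankM_maxl.
apply/matrixP => i j; rewrite (mulmx_monomialE _ tB) mxE tK.
have [B0 | nzB] := eqVneq (B i (t i)) 0; first by rewrite B0 mul0r A_zero.
by rewrite mulrC divfK.
Qed.

Lemma mxrank_monomial m n k (A : 'M[F]_(m, n)) (B : 'M[F]_(m, k))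
    (s : 'I_m -> 'I_n) (s' : 'I_n -> 'I_m) (t : 'I_m -> 'I_k) (t' : 'I_k -> 'I_m) :
  cancel s s' -> cancel t t' -> is_monomial_mx s A -> is_monomial_mx t B ->
  (forall i, (A i (s i) == 0) = (B i (t i) == 0)) -> \rank A = \rank B.
Proof.
move=> sK tK sA tB same0.
have row0 C u (uC : is_monomial_mx u C) i : C i (u i) = 0 -> forall j, C i j = 0.
  by move=> C0 j; have [->|] := eqVneq j (u i); last exact: uC.
apply/eqP; rewrite eqn_leq; apply/andP; split.
- apply: (mxrank_monomial_le tK tB) => i /eqP.
  by rewrite -same0 => /eqP; apply: row0.
- apply: (mxrank_monomial_le sK sA) => i /eqP.
  by rewrite same0 => /eqP; apply: row0.
Qed.

End MonomialRank.

Section HasseWittIterates.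

Variables (F : fieldType) (p g : nat) (H : 'M[F]_g) (s : 'I_g -> 'I_g).
Hypotheses (p_gt0 : (0 < p)%N) (sH : is_monomial_mx s H).

Lemma hw_iter_monomial n : is_monomial_mx (iter n s) (hw_iter p H n).
Proof.
elim: n => [|n IHn] /=; first by move=> i j /negbTE ne_j; rewrite mxE eq_sym ne_j.
apply: mulmx_monomial IHn _; apply: map_monomial_mx sH.
by rewrite expr0n expn_eq0 eqn0Ngt p_gt0.
Qed.

Lemma hw_iter_monomialE n i :
  hw_iter p H n i (iter n s i) =
  \prod_(l < n) H (iter l s i) (iter l.+1 s i) ^+ (p ^ l).
Proof.
elim: n => [|n IHn]; first by rewrite big_ord0 mxE eqxx.
by rewrite big_ord_recr /= (mulmx_monomialE _ (@hw_iter_monomial n)) IHn mxE.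
Qed.

Hypothesis s_zero_invariant : forall i, (H (s i) (s (s i)) == 0) = (H i (s i) == 0).

Lemma hw_iter_monomial_eq0 n i :
  (0 < n)%N -> (hw_iter p H n i (iter n s i) == 0) = (H i (s i) == 0).
Proof.
have iter_zero l : (H (iter l s i) (iter l.+1 s i) == 0) = (H i (s i) == 0).
  by elim: l => // l IHl; rewrite iterS s_zero_invariant.
move=> n_gt0; rewrite hw_iter_monomialE; apply/prodf_eq0/idP => [[l _]|H0].
  by rewrite expf_eq0 iter_zero => /andP[].
by exists (Ordinal n_gt0); rewrite // expf_eq0 expn_gt0 p_gt0 iter_zero.
Qed.

Lemma mxrank_hw_iter : involutive s -> \rank H = p_rank p H.
Proof.
move=> sK; apply: (mxrank_monomial sK (iter_can g sK)) => //.
  exact: hw_iter_monomial.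
move=> i; rewrite hw_iter_monomial_eq0 //.
exact: leq_ltn_trans (leq0n i) (ltn_ord i).
Qed.

End HasseWittIterates.

Lemma hw_hyp_monomial (F : fieldType) g (H : 'M[F]_g) :
  hw_hyp H -> exists s : 'I_g -> 'I_g,
    [/\ involutive s, is_monomial_mx s H &
        forall i, (H (s i) (s (s i)) == 0) = (H i (s i) == 0)].
Proof.
case=> [/is_diag_mxP diagH | [antidiagH paired]].
  by exists id; split=> // i j ne_j; rewrite diagH // eq_sym.
exists (@rev_ord g); split=> // [|i]; first exact: rev_ordK.
by rewrite rev_ordK; case: (paired i) => [[-> ->]|[/negbTE -> /negbTE ->]].
Qed.

Theorem lemma2p13 (F : closedFieldType) (p g : nat) (H : 'M[F]_g) :
  p \in [pchar F] -> hw_hyp H ->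
  \rank H = p_rank p H /\
  (p_rank p H = 0%N -> a_number H = g /\ H = 0).
Proof.
move=> /andP[/prime_gt0 p_gt0 _] /hw_hyp_monomial[s [sK sH s_zero]].
have rankE : \rank H = p_rank p H by apply: mxrank_hw_iter sK.
split=> // /eqP; rewrite -rankE mxrank_eq0 => /eqP H0.
by rewrite /a_number H0 mxrank0 subn0.
Qed.
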